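(* Let $d\ge1$ and $-1\le a<b<1$ with $a+b\ge 0$, and suppose \[ n=\frac{d\left(\left(\frac{a+b-2}{b-a}\right)^2-1\right)}{\left(\frac{a+b-2}{b-a}\right)^2-d} \] is an integer. If there exists a set of $n$ unit vectors in $\mathbb{R}^d$ such that the inner product of any two distinct ones lies in $\{a,b\}$, then there exists an equiangular tight frame consisting of $n$ vectors in $\mathbb{R}^d$.
   Context: An equiangular tight frame of $m$ vectors in $\mathbb{R}^k$ is a family of unit vectors $f_1,\dots,f_m\in\mathbb{R}^k$ such that $|\langle f_i,f_j\rangle|$ takes the same value for all $i\neq j$, and there is a constant $C>0$ with $\sum_{i=1}^m\langle x,f_i\rangle^2=C\|x\|^2$ for all $x\in\mathbb{R}^k$. *)

From mathcomp Require Import all_boot all_order all_algebra.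
From mathcomp Require Import reals.
Set Implicit Arguments. Unset Strict Implicit. Unset Printing Implicit Defensive.
Import Order.TTheory GRing.Theory Num.Theory.
Local Open Scope ring_scope.

Definition dotv (R : realType) (k : nat) (u v : 'rV[R]_k) : R :=
  \sum_(i < k) u 0 i * v 0 i.

Definition is_ETF (R : realType) (k m : nat) (f : 'I_m -> 'rV[R]_k) : Prop :=
  [/\ (forall i, dotv (f i) (f i) = 1),
      (exists c : R, forall i j, i != j -> `|dotv (f i) (f j)| = c)
    & (exists C : R, 0 < C /\
         forall x : 'rV[R]_k, \sum_(i < m) (dotv x (f i)) ^+ 2 = C * dotv x x)].

From mathcomp Require Import all_boot all_order all_algebra.
From mathcomp Require Import reals.
From mathcomp Require Import ring lra.
Set Implicit Arguments.
Unset Strict Implicit.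
Unset Printing Implicit Defensive.
Import Order.TTheory GRing.Theory Num.Theory.
Local Open Scope ring_scope.

(* Put m = (a + b) / 2 and w = (b - a) / 2, let F be the matrix with rows f_i, G = F F^T
   its Gram matrix and J the all-ones matrix.  The target Gram matrix M = G - m J has
   1 - m on the diagonal and +-w elsewhere, and the hypothesis on n says exactly that M
   is an equality case of the trace Cauchy-Schwarz inequality (tr M)^2 <= d tr (M M^T).
   With s = sum_i f_i, sigma = |s|^2 and beta >= 0 such that beta sigma = n m, the
   operator T = F^T F - beta s^T s has tr T = tr M and
     n (d tr (T T^T) - (tr T)^2) = 2 d beta (sigma^2 - n sum_i <f_i, s>^2),
   whose left side is >= 0 and right side <= 0, again by Cauchy-Schwarz.  Hence T is
   scalar and, unless beta = 0, all <f_i, s> are equal; this also forces n beta <= 1.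
   Choosing mu with 2 mu - n mu^2 = beta, the vectors (f_i - mu s) / sqrt (1 - m) have
   Gram matrix M / (1 - m) and frame operator T / (1 - m), so they form an equiangular
   tight frame. *)

Section TraceCauchySchwarz.
Variable R : realFieldType.

Lemma mxtrace_mul_trmx p q (X : 'M[R]_(p, q)) :
  \tr (X *m X^T) = \sum_i \sum_j X i j ^+ 2.
Proof.
by apply: eq_bigr => i _; rewrite mxE; apply: eq_bigr => j _; rewrite mxE expr2.
Qed.

Lemma mxtrace_mul_trmx_ge0 p q (X : 'M[R]_(p, q)) : 0 <= \tr (X *m X^T).
Proof.
by rewrite mxtrace_mul_trmx; apply: sumr_ge0 => i _; apply: sumr_ge0 => j _; apply: sqr_ge0.
Qed.

Lemma mxtrace_mul_trmx_eq0 p q (X : 'M[R]_(p, q)) :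
  (\tr (X *m X^T) == 0) = (X == 0).
Proof.
apply/eqP/eqP => [|->]; last by rewrite mul0mx linear0.
have row_ge0 i : 0 <= \sum_j X i j ^+ 2 by apply: sumr_ge0 => j _; apply: sqr_ge0.
rewrite mxtrace_mul_trmx => /psumr_eq0P X0; apply/matrixP => i j; rewrite mxE.
have /psumr_eq0P Xi0 := X0 (fun i _ => row_ge0 i) i isT.
by apply/eqP; rewrite -sqrf_eq0 Xi0 // => j' _; apply: sqr_ge0.
Qed.

Lemma mxtrace_sqr_leif k (T : 'M[R]_k) : (0 < k)%N ->
  \tr T ^+ 2 <= k%:R * \tr (T *m T^T) ?= iff (T == (\tr T / k%:R)%:M).
Proof.
move=> k_gt0; set c := \tr T / k%:R; set D := T - c%:M.
have k_neq0 : k%:R != 0 :> R by rewrite pnatr_eq0 -lt0n.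
have defect : k%:R * \tr (T *m T^T) - \tr T ^+ 2 = k%:R * \tr (D *m D^T).
  rewrite /D linearB /= tr_scalar_mx mulmxBl !mulmxBr mul_mx_scalar.
  rewrite mul_scalar_mx mul_mx_scalar !linearB /= !mxtraceZ.
  rewrite mxtrace_tr mxtrace_scalar -[_ / _ *+ k]mulr_natr /c; field; exact: k_neq0.
rewrite -[_ ^+ 2]add0r -leifBRL defect /Order.leif pmulr_rge0 ?ltr0n //.
split; first exact: mxtrace_mul_trmx_ge0.
by rewrite eq_sym mulf_eq0 (negbTE k_neq0) mxtrace_mul_trmx_eq0 subr_eq0.
Qed.

Lemma sum_sqr_leif k (x : 'rV[R]_k) : (0 < k)%N ->
  (\sum_i x 0 i) ^+ 2 <= k%:R * \sum_i x 0 i ^+ 2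
    ?= iff (x == const_mx ((\sum_i x 0 i) / k%:R)).
Proof.
move=> k_gt0; have := mxtrace_sqr_leif (diag_mx x) k_gt0.
rewrite tr_diag_mx mulmx_diag !mxtrace_diag -diag_const_mx.
under [X in _ * X]eq_bigr do rewrite mxE -expr2.
congr (_ <= _ ?= iff _); apply/eqP/eqP => [xc|xc]; last by congr diag_mx.
by apply/rowP => i; have := congr1 (fun A : 'M[R]_k => A i i) xc; rewrite !mxE eqxx !mulr1n.
Qed.

End TraceCauchySchwarz.

Section ShiftedFrame.
Variables (R : rcfType) (n d : nat) (F : 'M[R]_(n, d)).

Let ones : 'rV[R]_n := const_mx 1.
Let s := ones *m F.
Let x := s *m F^T.
Let sigma := (s *m s^T) 0 0.
Let G := F *m F^T.

Definition shifted_frame_op (beta : R) : 'M[R]_d := F^T *m F - beta *: (s^T *m s).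

Definition shift_rows (mu : R) : 'M[R]_(n, d) := F - mu *: (ones^T *m s).

Let ones_mul_tr : ones *m ones^T = n%:R%:M.
Proof.
rewrite [LHS]mx11_scalar mxE; congr _%:M.
by under eq_bigr do rewrite !mxE mulr1; rewrite sumr_const card_ord.
Qed.

Let ones_tr_mul : ones^T *m ones = const_mx 1.
Proof. by apply/matrixP => i j; rewrite !mxE big_ord1 !mxE mulr1. Qed.

Let s_mul_tr : s *m s^T = sigma%:M.
Proof. exact: mx11_scalar. Qed.

Let x_mul_ones_tr : x *m ones^T = sigma%:M.
Proof. by rewrite /x -mulmxA -trmx_mul s_mul_tr. Qed.

Lemma sum_dot_row_sum : \sum_i x 0 i = sigma.
Proof.
have := congr1 (fun A : 'M_1 => A 0 0) x_mul_ones_tr; rewrite !mxE eqxx mulr1n => <-.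
by apply: eq_bigr => i _; rewrite !mxE mulr1.
Qed.

Lemma mxtrace_shifted_frame_op beta :
  \tr (shifted_frame_op beta) = \tr G - beta * sigma.
Proof.
rewrite linearB /= mxtraceZ [\tr (F^T *m F)]mxtrace_mulC.
by rewrite [\tr (s^T *m s)]mxtrace_mulC s_mul_tr trace_mx11 mxE eqxx mulr1n.
Qed.

Lemma trmx_shifted_frame_op beta :
  (shifted_frame_op beta)^T = shifted_frame_op beta.
Proof. by rewrite /shifted_frame_op linearB /= linearZ /= !trmx_mul !trmxK. Qed.

Lemma mxtrace_shifted_frame_op_sqr beta :
  \tr (shifted_frame_op beta *m (shifted_frame_op beta)^T) =
  \tr (G *m G^T) - 2 * beta * (x *m x^T) 0 0 + beta ^+ 2 * sigma ^+ 2.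
Proof.
rewrite trmx_shifted_frame_op /shifted_frame_op mulmxBl !mulmxBr.
rewrite -!scalemxAl -!scalemxAr scalerA !linearB /= !mxtraceZ.
have trFFFF : \tr (F^T *m F *m (F^T *m F)) = \tr (G *m G^T).
  by rewrite /G trmx_mul trmxK !mulmxA [LHS]mxtrace_mulC !mulmxA.
have trFFss : \tr (F^T *m F *m (s^T *m s)) = (x *m x^T) 0 0.
  rewrite -trace_mx11 /x (trmx_mul s) trmxK (mulmxA (F^T *m F)) [LHS]mxtrace_mulC.
  by rewrite !mulmxA.
have trssFF : \tr (s^T *m s *m (F^T *m F)) = (x *m x^T) 0 0.
  by rewrite mxtrace_mulC trFFss.
have trssss : \tr (s^T *m s *m (s^T *m s)) = sigma ^+ 2.
  rewrite (mulmxA (s^T *m s)) -(mulmxA s^T s) s_mul_tr mul_mx_scalar -scalemxAl mxtraceZ.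
  by rewrite [\tr (s^T *m s)]mxtrace_mulC s_mul_tr trace_mx11 mxE mulr1n expr2.
rewrite trFFFF trFFss trssFF trssss; ring.
Qed.

Lemma mxtrace_sqr_gram_sub_const m :
  \tr ((G - m *: const_mx 1) *m (G - m *: const_mx 1)^T) =
  \tr (G *m G^T) - 2 * m * sigma + n%:R ^+ 2 * m ^+ 2.
Proof.
rewrite -ones_tr_mul linearB /= [(m *: _)^T]linearZ /= (trmx_mul ones^T) trmxK.
rewrite mulmxBl !mulmxBr.
rewrite -!scalemxAl -!scalemxAr scalerA !linearB /= !mxtraceZ.
have trGJ : \tr (G *m (ones^T *m ones)) = sigma.
  rewrite (mulmxA G) mxtrace_mulC mulmxA /G (mulmxA ones) -(mulmxA (ones *m F)).
  by rewrite -trmx_mul trace_mx11.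
have trJG : \tr (ones^T *m ones *m G^T) = sigma.
  by rewrite mxtrace_mulC /G (trmx_mul F) trmxK trGJ.
have trJJ : \tr (ones^T *m ones *m (ones^T *m ones)) = n%:R ^+ 2.
  rewrite (mulmxA (ones^T *m ones)) -(mulmxA ones^T ones) ones_mul_tr mul_mx_scalar.
  rewrite -scalemxAl mxtraceZ [\tr (ones^T *m ones)]mxtrace_mulC ones_mul_tr.
  by rewrite trace_mx11 mxE mulr1n expr2.
rewrite trGJ trJG trJJ; ring.
Qed.

Lemma frame_op_shift mu :
  (shift_rows mu)^T *m shift_rows mu = shifted_frame_op (2 * mu - n%:R * mu ^+ 2).
Proof.
rewrite /shift_rows /shifted_frame_op [(F - _)^T]linearB /= [(mu *: _)^T]linearZ /=.
rewrite (trmx_mul ones^T) trmxK mulmxBl !mulmxBr -!scalemxAl -!scalemxAr scalerA.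
have sJs : s^T *m ones *m (ones^T *m s) = n%:R *: (s^T *m s).
  rewrite (mulmxA (s^T *m ones)) -(mulmxA s^T ones ones^T) ones_mul_tr.
  by rewrite mul_mx_scalar -scalemxAl.
rewrite (mulmxA F^T) -(trmx_mul ones F) -/s sJs scalerA -(mulmxA s^T ones F) -/s.
rewrite -addrA -opprD -scalerBl -scalerDl; congr (_ - _ *: _); ring.
Qed.

Lemma gram_shift mu : (0 < n)%N -> mu = 0 \/ x = const_mx (sigma / n%:R) ->
  shift_rows mu *m (shift_rows mu)^T =
  G - ((2 * mu - n%:R * mu ^+ 2) * sigma / n%:R) *: const_mx 1.
Proof.
move=> n_gt0 [->|x_const].
  by rewrite /shift_rows expr2 !(mulr0, mul0r, scale0r, subr0).
have n_neq0 : n%:R != 0 :> R by rewrite pnatr_eq0 -lt0n.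
have xT : F *m s^T = x^T by rewrite /x (trmx_mul s) trmxK.
have x_ones : x = (sigma / n%:R) *: ones.
  by rewrite x_const; apply/rowP => i; rewrite !mxE mulr1.
rewrite /shift_rows [(F - _)^T]linearB /= [(mu *: _)^T]linearZ /= (trmx_mul ones^T) trmxK.
rewrite mulmxBl !mulmxBr -!scalemxAl -!scalemxAr scalerA.
rewrite (mulmxA F s^T) xT -(mulmxA ones^T s F^T) -/x.
rewrite (mulmxA (ones^T *m s)) -(mulmxA ones^T s s^T) s_mul_tr mul_mx_scalar.
rewrite x_ones [(_ *: ones)^T]linearZ /= -scalemxAl -scalemxAr -scalemxAl ones_tr_mul -/G.
rewrite !scalerA -addrA -opprD -scalerBl -scalerDl; congr (_ - _ *: _); field.
exact: n_neq0.
Qed.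

Lemma sigma_ge0 : 0 <= sigma.
Proof. by rewrite /sigma -trace_mx11 mxtrace_mul_trmx_ge0. Qed.

Section TwoDistance.
Variables (m w : R).
Hypotheses (n_gt0 : (0 < n)%N) (d_gt0 : (0 < d)%N).
Hypothesis gram_diag : forall i, G i i = 1.
Hypothesis gram_offdiag : forall i j, i != j -> `|G i j - m| = w.
Hypotheses (m_ge0 : 0 <= m) (m_lt1 : m < 1).
Hypothesis relative_bound_eq :
  n%:R * (1 - m) ^+ 2 = d%:R * ((1 - m) ^+ 2 + (n%:R - 1) * w ^+ 2).

Let lambda := n%:R * (1 - m) / d%:R.

Let n_neq0 : n%:R != 0 :> R. Proof. by rewrite pnatr_eq0 -lt0n. Qed.
Let d_neq0 : d%:R != 0 :> R. Proof. by rewrite pnatr_eq0 -lt0n. Qed.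

Lemma mxtrace_gram : \tr G = n%:R.
Proof.
by rewrite /mxtrace; under eq_bigr do rewrite gram_diag; rewrite sumr_const card_ord.
Qed.

Lemma relative_bound_gram :
  d%:R * (\tr (G *m G^T) - 2 * m * sigma + n%:R ^+ 2 * m ^+ 2) = (n%:R * (1 - m)) ^+ 2.
Proof.
rewrite -mxtrace_sqr_gram_sub_const mxtrace_mul_trmx.
have entry i j : (G - m *: const_mx 1) i j = G i j - m by rewrite !mxE mulr1.
have row_sum i : \sum_j (G i j - m) ^+ 2 = (1 - m) ^+ 2 + (n%:R - 1) * w ^+ 2.
  rewrite (bigD1 i) //= gram_diag; congr (_ + _).
  transitivity (\sum_(j | j != i) w ^+ 2).
    apply: eq_bigr => j ji; rewrite -(gram_offdiag (i := i) (j := j)).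
      by rewrite real_normK ?num_real.
    by rewrite eq_sym.
  by rewrite sumr_const cardC1 card_ord -subn1 -[w ^+ 2 *+ _]mulr_natl natrB.
under eq_bigr do under eq_bigr do rewrite entry.
rewrite (eq_bigr _ (fun i _ => row_sum i)) sumr_const card_ord mulrnAr.
by rewrite -relative_bound_eq; ring.
Qed.

(* If sigma = 0, the relative bound makes d tr (G G^T) smaller than n^2 = (tr (F^T F))^2. *)
Lemma sigma_gt0 : 0 < m -> 0 < sigma.
Proof.
move=> m_gt0; rewrite lt_def sigma_ge0 andbT; apply/eqP => sigma0.
have := (mxtrace_sqr_leif (shifted_frame_op 0) d_gt0).1.
rewrite mxtrace_shifted_frame_op mxtrace_shifted_frame_op_sqr mxtrace_gram sigma0.
have := relative_bound_gram; rewrite sigma0.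
have : 0 < n%:R ^+ 2 * m * (2 - m).
  by rewrite !mulr_gt0 ?exprn_gt0 ?ltr0n //; move: m_lt1; lra.
have : 0 <= d%:R * n%:R ^+ 2 * m ^+ 2 by rewrite !mulr_ge0 ?ler0n ?sqr_ge0.
lra.
Qed.

Lemma mxtrace_shifted_frame_op_eq beta : beta * sigma = n%:R * m ->
  \tr (shifted_frame_op beta) = n%:R * (1 - m).
Proof.
by move=> beta_sigma; rewrite mxtrace_shifted_frame_op mxtrace_gram beta_sigma; ring.
Qed.

Lemma shifted_frame_op_defect beta : beta * sigma = n%:R * m ->
  let T := shifted_frame_op beta in
  n%:R * (d%:R * \tr (T *m T^T) - \tr T ^+ 2) =
  2 * d%:R * beta * (sigma ^+ 2 - n%:R * (x *m x^T) 0 0).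
Proof.
move=> beta_sigma /=.
have m_eq : m = beta * sigma / n%:R by rewrite beta_sigma mulrAC divff // mul1r.
have trGG : \tr (G *m G^T) =
    ((n%:R * (1 - m)) ^+ 2 - d%:R * (n%:R ^+ 2 * m ^+ 2 - 2 * m * sigma)) / d%:R.
  by rewrite -relative_bound_gram; field.
rewrite mxtrace_shifted_frame_op_sqr mxtrace_shifted_frame_op_eq // trGG m_eq.
by field; apply/andP.
Qed.

Lemma tight_shifted_frame_op beta : 0 <= beta -> beta * sigma = n%:R * m ->
  shifted_frame_op beta = lambda%:M /\ (beta = 0 \/ x = const_mx (sigma / n%:R)).
Proof.
move=> beta_ge0 beta_sigma; set T := shifted_frame_op beta.
have [cs_T cs_T_eq] := mxtrace_sqr_leif T d_gt0.
have [cs_x cs_x_eq] := sum_sqr_leif x n_gt0.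
have sum_sqr_x : \sum_i x 0 i ^+ 2 = (x *m x^T) 0 0.
  by rewrite [RHS]mxE; apply: eq_bigr => i _; rewrite [x^T i 0]mxE expr2.
rewrite sum_dot_row_sum sum_sqr_x in cs_x cs_x_eq.
have := shifted_frame_op_defect beta_sigma; rewrite -/T => defect.
have /eqP defect0 : n%:R * (d%:R * \tr (T *m T^T) - \tr T ^+ 2) == 0.
  rewrite eq_le mulr_ge0 ?ler0n ?subr_ge0 // andbT defect.
  by rewrite mulr_ge0_le0 ?mulr_ge0 ?ler0n // subr_le0.
split.
  apply/eqP; rewrite /lambda -(mxtrace_shifted_frame_op_eq beta_sigma) -/T -cs_T_eq eq_sym.
  by move: defect0 => /eqP; rewrite mulf_eq0 (negbTE n_neq0) subr_eq0 /=.
move: defect0; rewrite defect => /eqP; rewrite !mulf_eq0 (negbTE d_neq0) pnatr_eq0 /=.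
case/orP => [/eqP beta0|]; first by left.
by rewrite subr_eq0 cs_x_eq => /eqP; right.
Qed.

Lemma shifted_frame_op_bound beta : shifted_frame_op beta = lambda%:M ->
  x = const_mx (sigma / n%:R) -> 0 < sigma -> n%:R * beta <= 1.
Proof.
move=> T_eq x_const sigma_gt0.
have quad : s *m shifted_frame_op beta *m s^T = (x *m x^T - (beta * sigma ^+ 2)%:M).
  rewrite /shifted_frame_op mulmxBr mulmxBl -scalemxAr -scalemxAl.
  rewrite (mulmxA s F^T F) -(mulmxA (s *m F^T) F) /x (trmx_mul s) trmxK.
  rewrite (mulmxA s s^T s) s_mul_tr mul_scalar_mx -scalemxAl s_mul_tr.
  by rewrite !scale_scalar_mx expr2 mulrA.
have xx : x *m x^T = (sigma ^+ 2 / n%:R)%:M.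
  rewrite [LHS]mx11_scalar x_const mxE; congr _%:M.
  under eq_bigr do rewrite !mxE.
  by rewrite sumr_const card_ord -[_ *+ n]mulr_natl; field.
have := congr1 mxtrace quad.
rewrite T_eq mul_mx_scalar -scalemxAl s_mul_tr xx linearB /=.
rewrite !(scale_scalar_mx, mxtrace_scalar, mulr1n) => lambda_sigma.
have lambda_ge0 : 0 <= lambda by rewrite divr_ge0 ?mulr_ge0 ?ler0n // subr_ge0 ltW.
have : 0 <= sigma ^+ 2 * (1 - n%:R * beta).
  have -> : sigma ^+ 2 * (1 - n%:R * beta) = n%:R * (lambda * sigma).
    by rewrite lambda_sigma; field.
  by rewrite mulr_ge0 ?ler0n // mulr_ge0 // ltW.
by rewrite pmulr_rge0 ?exprn_gt0 // subr_ge0.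
Qed.

Lemma exists_tight_shifted_frame_op : exists beta,
  [/\ beta * sigma = n%:R * m, n%:R * beta <= 1, shifted_frame_op beta = lambda%:M
    & beta = 0 \/ x = const_mx (sigma / n%:R)].
Proof.
have [beta [beta_ge0 beta_sigma beta0_or_sigma_gt0]] :
    exists beta, [/\ 0 <= beta, beta * sigma = n%:R * m & beta = 0 \/ 0 < sigma].
  have [->|m_neq0] := eqVneq m 0.
    by exists 0; rewrite mul0r mulr0; split; [| |left].
  have sigma_pos : 0 < sigma by apply: sigma_gt0; rewrite lt_def m_neq0 m_ge0.
  exists (n%:R * m / sigma); split; last by right.
    by rewrite divr_ge0 ?mulr_ge0 ?ler0n // ltW.
  by rewrite divfK // gt_eqF.
have [T_eq beta0_or_x_const] := tight_shifted_frame_op beta_ge0 beta_sigma.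
exists beta; split => //.
case: beta0_or_sigma_gt0 => [->|sigma_pos]; first by rewrite mulr0 ler01.
case: beta0_or_x_const => [->|x_const]; first by rewrite mulr0 ler01.
exact: shifted_frame_op_bound.
Qed.

Lemma exists_tight_equiangular_rows : exists H : 'M[R]_(n, d),
  [/\ forall i, (H *m H^T) i i = 1,
      forall i j, i != j -> `|(H *m H^T) i j| = w / (1 - m)
    & exists2 C, 0 < C & H^T *m H = C%:M].
Proof.
have [beta [beta_sigma beta_le1 T_eq beta0_or_x_const]] := exists_tight_shifted_frame_op.
pose mu := (1 - Num.sqrt (1 - n%:R * beta)) / n%:R.
have mu_root : 2 * mu - n%:R * mu ^+ 2 = beta.
  have r2 : Num.sqrt (1 - n%:R * beta) ^+ 2 = 1 - n%:R * beta.
    by rewrite sqr_sqrtr // subr_ge0.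
  transitivity ((1 - Num.sqrt (1 - n%:R * beta) ^+ 2) / n%:R); first by rewrite /mu; field.
  by rewrite r2; field.
have mu0_or_x_const : mu = 0 \/ x = const_mx (sigma / n%:R).
  case: beta0_or_x_const => [beta0|]; last by right.
  by left; rewrite /mu beta0 mulr0 subr0 sqrtr1 subrr mul0r.
have m_neq1 : 1 - m != 0 by rewrite subr_eq0 eq_sym lt_eqF.
pose c := (1 - m)^-1.
have c_gt0 : 0 < c by rewrite invr_gt0 subr_gt0.
have c_sqrt : Num.sqrt c ^+ 2 = c by rewrite sqr_sqrtr // ltW.
pose H := Num.sqrt c *: shift_rows mu.
have gramH : H *m H^T = c *: (G - m *: const_mx 1).
  rewrite /H [(_ *: shift_rows mu)^T]linearZ /= -scalemxAl -scalemxAr scalerA -expr2 c_sqrt.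
  rewrite gram_shift // mu_root beta_sigma.
  by congr (_ *: (_ - _ *: _)); field.
have frameH : H^T *m H = (c * lambda)%:M.
  rewrite /H [(_ *: shift_rows mu)^T]linearZ /= -scalemxAl -scalemxAr scalerA -expr2 c_sqrt.
  by rewrite frame_op_shift mu_root T_eq scale_scalar_mx.
have entryH i j : (H *m H^T) i j = c * (G i j - m) by rewrite gramH !mxE mulr1.
exists H; split.
- by move=> i; rewrite entryH gram_diag mulVf.
- move=> i j ij; rewrite entryH normrM gram_offdiag //.
  by rewrite ger0_norm ?ltW // mulrC.
- exists (c * lambda) => //.
  by rewrite mulr_gt0 // divr_gt0 ?mulr_gt0 ?ltr0n // subr_gt0.
Qed.

End TwoDistance.

End ShiftedFrame.

Lemma dotvE (R : realType) k (u v : 'rV[R]_k) : dotv u v = (u *m v^T) 0 0.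
Proof. by rewrite mxE; apply: eq_bigr => i _; rewrite mxE. Qed.

Lemma dotv_rows (R : realType) n p d (A : 'M[R]_(n, d)) (B : 'M[R]_(p, d)) i j :
  dotv (row i A) (row j B) = (A *m B^T) i j.
Proof. by rewrite mxE; apply: eq_bigr => k _; rewrite !mxE. Qed.

Lemma is_ETF_rows (R : realType) n d (H : 'M[R]_(n, d)) c C :
  (forall i, (H *m H^T) i i = 1) ->
  (forall i j, i != j -> `|(H *m H^T) i j| = c) ->
  0 < C -> H^T *m H = C%:M -> is_ETF (fun i => row i H).
Proof.
move=> H_diag H_offdiag C_gt0 H_tight; split.
- by move=> i; rewrite dotv_rows.
- by exists c => i j ij; rewrite dotv_rows H_offdiag.
exists C; split => // y.
transitivity ((y *m H^T *m (y *m H^T)^T) 0 0).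
  rewrite [RHS]mxE; apply: eq_bigr => i _.
  by rewrite -[in LHS](row_id 0 y) dotv_rows expr2 [_^T i 0]mxE.
rewrite trmx_mul trmxK mulmxA -(mulmxA y) H_tight mul_mx_scalar -scalemxAl.
by rewrite mxE dotvE.
Qed.

Lemma relative_bound_of_size (R : realFieldType) (d n : nat) (a b : R) :
  (0 < d)%N -> a < b -> b < 1 ->
  let q := (a + b - 2) / (b - a) in
  q ^+ 2 - d%:R != 0 -> n%:R = d%:R * (q ^+ 2 - 1) / (q ^+ 2 - d%:R) ->
  (0 < n)%N /\
  n%:R * (1 - (a + b) / 2) ^+ 2 =
    d%:R * ((1 - (a + b) / 2) ^+ 2 + (n%:R - 1) * ((b - a) / 2) ^+ 2).
Proof.
move=> d_gt0 ab b1 q q_neq0 n_eq.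
set m := (a + b) / 2; set w := (b - a) / 2.
have ba_neq0 : b - a != 0 by rewrite subr_eq0 gt_eqF.
have qw : q * w = m - 1 by rewrite /q /w /m; field.
have size_eq : n%:R * (q ^+ 2 - d%:R) = d%:R * (q ^+ 2 - 1) by rewrite n_eq divfK.
have bound : n%:R * (1 - m) ^+ 2 = d%:R * ((1 - m) ^+ 2 + (n%:R - 1) * w ^+ 2).
  have -> : (1 - m) ^+ 2 = q ^+ 2 * w ^+ 2 by rewrite -exprMn qw; ring.
  apply/eqP; rewrite -subr_eq0; apply/eqP.
  transitivity ((n%:R * (q ^+ 2 - d%:R) - d%:R * (q ^+ 2 - 1)) * w ^+ 2); first ring.
  by rewrite size_eq subrr mul0r.
split => //; rewrite lt0n; apply/eqP => n0; move: bound; rewrite n0 mul0r.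
have gap : (1 - m) ^+ 2 - w ^+ 2 = (1 - a) * (1 - b) by rewrite /m /w; field.
have : 0 < d%:R * ((1 - a) * (1 - b)).
  by rewrite !mulr_gt0 ?ltr0n // subr_gt0 //; apply: lt_trans b1.
rewrite -gap; lra.
Qed.

Theorem mainTheorem11 (R : realType) (d n : nat) (a b : R) :
  (1 <= d)%N -> -1 <= a -> a < b -> b < 1 -> 0 <= a + b ->
  ((a + b - 2) / (b - a)) ^+ 2 - d%:R != 0 ->
  n%:R = d%:R * (((a + b - 2) / (b - a)) ^+ 2 - 1)
         / (((a + b - 2) / (b - a)) ^+ 2 - d%:R) ->
  (exists f : 'I_n -> 'rV[R]_d,
      (forall i, dotv (f i) (f i) = 1) /\
      (forall i j, i != j -> dotv (f i) (f j) = a \/ dotv (f i) (f j) = b)) ->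
  exists g : 'I_n -> 'rV[R]_d, is_ETF g.
Proof.
(* [-1 <= a] is automatic for unit vectors. *)
move=> d_gt0 _ ab b1 ab_ge0 q_neq0 n_eq [f [f_unit f_ab]].
have [n_gt0 bound] := relative_bound_of_size d_gt0 ab b1 q_neq0 n_eq.
pose F := \matrix_(i < n) f i.
have gramF i j : (F *m F^T) i j = dotv (f i) (f j) by rewrite -dotv_rows !rowK.
have F_diag i : (F *m F^T) i i = 1 by rewrite gramF f_unit.
have F_offdiag i j : i != j -> `|(F *m F^T) i j - (a + b) / 2| = (b - a) / 2.
  move=> ij; have w_ge0 : 0 <= (b - a) / 2 by rewrite divr_ge0 // subr_ge0 ltW.
  case: (f_ab i j ij) => dot_ij; rewrite gramF dot_ij.
    have -> : a - (a + b) / 2 = - ((b - a) / 2) by field.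
    by rewrite normrN ger0_norm.
  have -> : b - (a + b) / 2 = (b - a) / 2 by field.
  by rewrite ger0_norm.
have m_ge0 : 0 <= (a + b) / 2 by rewrite divr_ge0.
have m_lt1 : (a + b) / 2 < 1 by move: ab b1; lra.
have [H [H_diag H_offdiag [C C_gt0 H_tight]]] :=
  exists_tight_equiangular_rows n_gt0 d_gt0 F_diag F_offdiag m_ge0 m_lt1 bound.
by exists (fun i => row i H); apply: is_ETF_rows H_diag H_offdiag C_gt0 H_tight.
Qed.
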